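(* For all $n\ge 1$, $f(n)<2n$.
   Context: $\mathbb{N}=\{0,1,2,\dots\}$. The sequence $f:\mathbb{N}\to\mathbb{N}$ is defined greedily: $f(0)=0$, and for $n\ge1$, $f(n)$ is the least natural number such that (i) $f(n)\notin\{f(0),f(1),\dots,f(n-1)\}$ and (ii) $\sum_{1\le i\le n} f(i)$ is divisible by $n$. *)

From mathcomp Require Import all_boot.
Set Implicit Arguments. Unset Strict Implicit. Unset Printing Implicit Defensive.

Definition admissible (g : nat -> nat) (n m : nat) : Prop :=
  (forall i, i < n -> g i <> m) /\ n %| (\sum_(1 <= i < n) g i) + m.

Definition greedy_seq (g : nat -> nat) : Prop :=
  g 0 = 0 /\
  forall n, 1 <= n ->
    admissible g n (g n) /\ (forall m, admissible g n m -> g n <= m).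

(* Write S(n) = f 1 + ... + f n.  By condition (ii), S(n) = n * c
   for some c (the mean of f 1, ..., f n).  We maintain the invariant
       S(n) = n * c,   c <= n,   and   f i <= c + n  for all i <= n.
   Under it the value c + (n+1) is admissible for f (n+1): it exceeds every
   earlier value, and S(n) + c + (n+1) = (n+1) * (c+1).  By minimality of
   the greedy choice, f (n+1) <= c + n + 1 <= 2n + 1, which is the theorem.
   The invariant propagates: the new mean q with (n+1) * q = n * c + f (n+1)
   satisfies c <= q <= c + 1, an elementary fact about integer quotients. *)
From mathcomp Require Import all_boot zify.

Lemma admissible_next_candidate (g : nat -> nat) (n c : nat) :
  \sum_(1 <= i < n.+1) g i = n * c ->
  (forall i, i <= n -> g i <= c + n) ->
  admissible g n.+1 (c + n.+1).
Proof.
move=> sum_eq g_le; split.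
- by move=> i /ltnSE /g_le; lia.
- by rewrite sum_eq; apply/dvdnP; exists c.+1; lia.
Qed.

Lemma next_mean_bounds {n c x q : nat} :
  c <= n -> x <= c + n.+1 -> n * c + x = q * n.+1 -> c <= q <= c.+1.
Proof. by move=> c_le x_le eq_q; apply/andP; split; nia. Qed.

Definition bounded_mean (g : nat -> nat) (n : nat) : Prop :=
  exists c, [/\ \sum_(1 <= i < n.+1) g i = n * c, c <= n &
                forall i, i <= n -> g i <= c + n].

Section GreedyBound.
Variable f : nat -> nat.
Hypothesis hf : greedy_seq f.

Lemma greedy_next_le {n c : nat} :
  \sum_(1 <= i < n.+1) f i = n * c ->
  (forall i, i <= n -> f i <= c + n) ->
  f n.+1 <= c + n.+1.
Proof.
move=> sum_eq f_le; have [_ minimal] := proj2 hf n.+1 erefl.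
exact/minimal/admissible_next_candidate.
Qed.

Lemma greedy_bounded_mean (n : nat) : bounded_mean f n.
Proof.
elim: n => [|n [c [sum_eq c_le f_le]]].
  exists 0; split; rewrite ?big_geq // => i; rewrite leqn0 => /eqP ->.
  by rewrite (proj1 hf).
have next_le := greedy_next_le sum_eq f_le.
have [[_ next_dvd] _] := proj2 hf n.+1 erefl.
rewrite sum_eq in next_dvd; case/dvdnP: next_dvd => q eq_q.
have /andP [c_le_q q_le] := next_mean_bounds c_le next_le eq_q.
exists q; split; first by rewrite big_nat_recr //= sum_eq; lia.
- lia.
- move=> i; rewrite leq_eqVlt => /orP [/eqP -> | /f_le]; lia.
Qed.

End GreedyBound.

Theorem mainTheorem2 (f : nat -> nat) (hf : greedy_seq f) :
  forall n, 1 <= n -> f n < 2 * n.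
Proof.
case=> [//|n] _.
have [c [sum_eq c_le f_le]] := greedy_bounded_mean f hf n.
have := greedy_next_le f hf sum_eq f_le; lia.
Qed.
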